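(* Let $p$ be an odd prime, let $a$ be an integer with $a\not\equiv 0,\pm1\pmod p$, and let $n\ge 1$ with $T_n(a)\not\equiv\pm1\pmod p$. Define $\epsilon(b)=\left(\frac{b^2-1}{p}\right)$ and $\delta(b)=\left(\frac{2(b+1)}{p}\right)$ (Legendre symbols). Then $\epsilon(T_n(a))=\epsilon(a)$. Moreover $\delta(T_n(a))=1$ if $n$ is even and $\delta(T_n(a))=\delta(a)$ if $n$ is odd.
   Context: $T_n(x)$ denotes the Chebyshev polynomial of the first kind, the integer polynomial with $T_n(\cos\theta)=\cos n\theta$, equivalently $(x+\sqrt{x^2-1})^n=T_n(x)+U_{n-1}(x)\sqrt{x^2-1}$. *)

From mathcomp Require Import all_boot all_order all_algebra.
Set Implicit Arguments. Unset Strict Implicit. Unset Printing Implicit Defensive.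
Import Order.TTheory GRing.Theory Num.Theory.
Local Open Scope ring_scope.

(* Chebyshev polynomial of the first kind, evaluated in a commutative ring:
   T_0 = 1, T_1 = x, T_{n+2} = 2 x T_{n+1} - T_n.  (Equivalent to T_n(cos t) = cos(n t).) *)
Fixpoint chebT_pair {R : comNzRingType} (x : R) (n : nat) : R * R :=
  match n with
  | 0%N => (1, x)
  | k.+1 => let (a, b) := chebT_pair x k in (b, 2 * x * b - a)
  end.

Definition chebT {R : comNzRingType} (n : nat) (x : R) : R := (chebT_pair x n).1.

Definition legendre (a : int) (p : nat) : int :=
  if (p%:Z %| a)%Z then 0
  else if [exists x : 'I_p, ((x%:Z) ^+ 2 == a %[mod p%:Z])%Z] then 1 else -1.

(* Over F_p, with w := T_{n+1}(a) - a T_n(a) (that is, (a^2 - 1) U_{n-1}(a)), the Pell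
   equation reads (T_n(a)^2 - 1)(a^2 - 1) = w^2, so the two arguments of epsilon differ
   by a square factor.  Likewise 2(T_{2m}(a) + 1) = (2 T_m(a))^2 and
   2(T_{2m+1}(a) + 1) * 2(a + 1) = (2 (T_m(a) + T_{m+1}(a)))^2, which gives delta. *)

From mathcomp Require Import all_boot all_order all_algebra.
From mathcomp Require Import ring.
Set Implicit Arguments. Unset Strict Implicit.
Import Order.TTheory GRing.Theory Num.Theory.
Local Open Scope ring_scope.

Section Chebyshev.
Variable R : comNzRingType.
Implicit Types x : R.

Lemma chebT0 x : chebT 0 x = 1. Proof. by []. Qed.

Lemma chebT1 x : chebT 1 x = x. Proof. by []. Qed.

Lemma chebTSS x k : chebT k.+2 x = 2 * x * chebT k.+1 x - chebT k x.
Proof. by rewrite /chebT /=; case: (chebT_pair x k). Qed.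

Lemma chebT_succ_sqr x k :
  chebT k.+1 x ^+ 2 = 2 * x * chebT k x * chebT k.+1 x - chebT k x ^+ 2 + 1 - x ^+ 2.
Proof.
elim: k => [|k IHk]; first by rewrite chebT0 chebT1; ring.
by rewrite chebTSS IHk; ring.
Qed.

Lemma chebT_pell x k :
  (chebT k.+1 x - x * chebT k x) ^+ 2 = (chebT k x ^+ 2 - 1) * (x ^+ 2 - 1).
Proof.
have -> : (chebT k.+1 x - x * chebT k x) ^+ 2
  = chebT k.+1 x ^+ 2 - 2 * x * chebT k x * chebT k.+1 x + x ^+ 2 * chebT k x ^+ 2.
  by ring.
by rewrite chebT_succ_sqr; ring.
Qed.

Lemma chebT_double_pair x m :
  chebT m.*2 x = 2 * chebT m x ^+ 2 - 1 /\
  chebT m.*2.+1 x = 2 * chebT m x * chebT m.+1 x - x.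
Proof.
elim: m => [|m [IHe IHo]]; first by rewrite chebT0 chebT1; split; ring.
have even_step : chebT m.+1.*2 x = 2 * chebT m.+1 x ^+ 2 - 1.
  by rewrite doubleS chebTSS IHe IHo chebT_succ_sqr; ring.
split=> //.
by rewrite doubleS chebTSS -doubleS even_step IHo chebTSS; ring.
Qed.

Lemma chebT_double x m : chebT m.*2 x = 2 * chebT m x ^+ 2 - 1.
Proof. by case: (chebT_double_pair x m). Qed.

Lemma chebT_double_succ x m : chebT m.*2.+1 x = 2 * chebT m x * chebT m.+1 x - x.
Proof. by case: (chebT_double_pair x m). Qed.

Lemma chebT_double_add1 x m : 2 * (chebT m.*2 x + 1) = (2 * chebT m x) ^+ 2.
Proof. by rewrite chebT_double; ring. Qed.

Lemma chebT_double_succ_add1 x m :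
  2 * (chebT m.*2.+1 x + 1) * (2 * (x + 1)) = (2 * (chebT m x + chebT m.+1 x)) ^+ 2.
Proof. by rewrite chebT_double_succ exprMn (sqrrD (chebT m x)) chebT_succ_sqr; ring. Qed.

End Chebyshev.

Lemma rmorph_chebT (R S : comNzRingType) (f : {rmorphism R -> S}) (x : R) k :
  f (chebT k x) = chebT k (f x).
Proof.
suff [] : f (chebT k x) = chebT k (f x) /\ f (chebT k.+1 x) = chebT k.+1 (f x) by [].
elim: k => [|k [IHk IHk1]]; first by rewrite !chebT0 !chebT1 rmorph1.
by split=> //; rewrite !chebTSS rmorphB !rmorphM IHk IHk1 rmorph_nat.
Qed.

Section QuadraticCharacter.
Variable F : finFieldType.
Implicit Types u v w : F.

Definition qchar u : int :=
  if u == 0 then 0 else if [exists z, z ^+ 2 == u] then 1 else -1.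

Lemma square_mul_sqr u v w : u != 0 -> u * v = w ^+ 2 ->
  [exists z, z ^+ 2 == u] -> [exists z, z ^+ 2 == v].
Proof.
move=> u0 uv_sq /existsP[z /eqP z_sq]; apply/existsP; exists (w / z).
have z0 : z != 0 by apply: contraNneq u0 => z0; rewrite -z_sq z0 expr0n.
by rewrite expr_div_n -uv_sq -z_sq mulrC mulKf ?expf_neq0.
Qed.

Lemma qchar_mul_sqr u v w : u != 0 -> v != 0 -> u * v = w ^+ 2 -> qchar u = qchar v.
Proof.
move=> u0 v0 uv_sq; rewrite /qchar (negbTE u0) (negbTE v0).
have vu_sq : v * u = w ^+ 2 by rewrite mulrC.
case: (boolP [exists z, z ^+ 2 == u]) => [/(square_mul_sqr u0 uv_sq)->|Nu] //.
case: (boolP [exists z, z ^+ 2 == v]) => // /(square_mul_sqr v0 vu_sq).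
by rewrite (negbTE Nu).
Qed.

Lemma qchar_sqr w : w != 0 -> qchar (w ^+ 2) = 1.
Proof.
move=> w0; rewrite /qchar expf_eq0 (negbTE w0) andbF.
by case: existsP => // -[]; exists w.
Qed.

Lemma sqr_sub1_neq0 u : u != 1 -> u != -1 -> u ^+ 2 - 1 != 0.
Proof. by move=> u1 uN1; rewrite subr_eq0 sqrf_eq1 negb_or u1. Qed.

Lemma qchar_chebT_sqr_sub1 (x : F) n : x != 1 -> x != -1 ->
  chebT n x != 1 -> chebT n x != -1 ->
  qchar (chebT n x ^+ 2 - 1) = qchar (x ^+ 2 - 1).
Proof.
move=> x1 xN1 t1 tN1.
by apply: (qchar_mul_sqr (w := chebT n.+1 x - x * chebT n x));
  rewrite ?sqr_sub1_neq0 // chebT_pell.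
Qed.

Lemma qchar_double_chebT_add1 (x : F) n :
  (2 : F) != 0 -> x != -1 -> chebT n x != -1 ->
  qchar (2 * (chebT n x + 1)) = if odd n then qchar (2 * (x + 1)) else 1.
Proof.
move=> two0 xN1; rewrite -[n]odd_double_half.
have twice_add1_neq0 (y : F) : y != -1 -> 2 * (y + 1) != 0.
  by move=> yN1; rewrite mulf_neq0 // addr_eq0.
case: (odd n) => /= tN1; rewrite ?odd_double /=; have := twice_add1_neq0 _ tN1.
  move=> tw0; apply: qchar_mul_sqr (chebT_double_succ_add1 _ _) => //.
  exact: twice_add1_neq0.
by rewrite add0n chebT_double_add1 expf_eq0 /= => /qchar_sqr.
Qed.

End QuadraticCharacter.

Section PrimeField.
Variable p : nat.
Hypothesis p_prime : prime p.

Lemma eqz_mod_Fp (x y : int) : (x == y %[mod p%:Z])%Z = (x%:~R == y%:~R :> 'F_p).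
Proof. by rewrite eqz_mod_dvd (dvdz_pcharf (pchar_Fp p_prime)) rmorphB subr_eq0. Qed.

Lemma legendre_Fp (a : int) : legendre a p = qchar (a%:~R : 'F_p).
Proof.
rewrite /legendre /qchar (dvdz_pcharf (pchar_Fp p_prime)); case: (_ == 0) => //.
congr (if _ then _ else _); apply/existsP/existsP => [[x] | [z /eqP z_sq]].
  by rewrite eqz_mod_Fp rmorphXn => x_sq; exists (val x)%:R.
have z_lt_p : (val z < p)%N by rewrite -[p in (_ < p)%N](Fp_cast p_prime) ltn_ord.
exists (Ordinal z_lt_p); rewrite eqz_mod_Fp rmorphXn -z_sq /=.
suff -> : ((val z)%:~R : 'F_p) = z by [].
by apply: val_inj; rewrite /= val_Fp_nat // modn_small.
Qed.

Lemma Fp_two_neq0 : odd p -> (2 : 'F_p) != 0.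
Proof.
move=> p_odd; rewrite -[2]/(2%:R) -(dvdn_pcharf (pchar_Fp p_prime)).
by rewrite gtnNdvd // odd_prime_gt2.
Qed.

End PrimeField.

Theorem lemma3p3 (p : nat) (a : int) (n : nat) :
  prime p -> odd p ->
  ~~ (p%:Z %| a)%Z -> (a != 1 %[mod p%:Z])%Z -> (a != -1 %[mod p%:Z])%Z ->
  (1 <= n)%N ->
  (chebT n a != 1 %[mod p%:Z])%Z -> (chebT n a != -1 %[mod p%:Z])%Z ->
  legendre (chebT n a ^+ 2 - 1) p = legendre (a ^+ 2 - 1) p /\
  legendre (2 * (chebT n a + 1)) p =
    (if odd n then legendre (2 * (a + 1)) p else 1).
Proof.
move=> p_prime p_odd _ a1 aN1 _ t1 tN1.
rewrite !eqz_mod_Fp // rmorph_chebT in a1 aN1 t1 tN1.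
rewrite !legendre_Fp // !rmorphM rmorph_nat.
rewrite !rmorphB !rmorphD !rmorphXn !rmorph1 rmorph_chebT.
(* The hypotheses mention (1 : int)%:~R and (-1 : int)%:~R, convertible to 1 and -1. *)
split; first exact: qchar_chebT_sqr_sub1.
by apply: qchar_double_chebT_add1; rewrite ?Fp_two_neq0.
Qed.
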